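(* The Que Sera Consensus (QSC) protocol, as described in the context, implements multi-consensus on $n$ nodes atop a full-spread threshold synchronous broadcast primitive $\mathrm{TSB}(t_r,t_b,n)$ with $t_r>0$ and $t_b>0$; that is, it satisfies the Liveness, Validity and Consistency properties defined in the context.
   Context: Threshold synchronous broadcast (TSB). A group of $n$ nodes, numbered $1,\dots,n$, operates in integer logical time-steps $0,1,2,\dots$. Nodes may fail only by crashing permanently. In each time-step every non-failed node calls $\mathrm{Broadcast}(m)$ exactly once; the call returns a pair $(R,B)$ of message sets. A primitive provides $\mathrm{TSB}(t_r,t_b,t_s)$ if: (lock-step synchrony) a call to $\mathrm{Broadcast}(m)$ at step $s$ returns at step $s+1$ unless the node fails before reaching step $s+1$; (receive threshold) if node $i$'s call at step $s$ returns $(R,B)$, there is $N_R\subseteq\{1,\dots,n\}$ with $|N_R|\ge t_r$ such that $R$ is exactly the set of messages broadcast by the nodes in $N_R$ during step $s$; (broadcast threshold) there is $N_B\subseteq\{1,\dots,n\}$ with $|N_B|\ge t_b$ such that $B$ is exactly the set of messages broadcast by the nodes in $N_B$ during step $s$; (spread threshold) if some node's call at step $s$ returns $(R,B)$ with $m'\in B$, then there are at least $t_s$ nodes whose receive sets $R$ returned from their step-$s$ calls include $m'$ (a node that fails before completing step $s$ counts if it would have received $m'$ had it not failed). The case $t_s=n$ is called full-spread. Standing assumption: the network's choice of the sets $N_R,N_B$ is independent of the random priority values contained in messages (e.g. private channels). Histories and priorities. A proposal is a triple $\langle i,m,r\rangle$ (node, message, numeric priority). A history is a finite list of proposals; $[]$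 is the empty history and $\|$ is concatenation. The priority of a nonempty history is the priority of its last proposal. A history $h$ is best in a set $H$ if $h\in H$ and no $h'\in H$ has strictly greater priority; $h$ is uniquely best in $H$ if $h\in H$ and no other $h'\ne h$ in $H$ has priority $\ge$ that of $h$. QSC protocol. Parameterized by ChooseMessage (returns some message, possibly empty; the application upcalls do not interfere with the protocol), Deliver (passes a history to the application), RandomValue (returns a value drawn using node-private randomness from a fixed nontrivial distribution, the same on every node, having at least two values of nonzero probability), and Broadcast (the TSB primitive). Each node $i$ runs: $h\leftarrow[]$; forever repeat: $m\leftarrow\mathrm{ChooseMessage}()$; $r\leftarrow\mathrm{RandomValue}()$; $h'\leftarrow h\,\|\,[\langle i,m,r\rangle]$; $(R',B')\leftarrow\mathrm{Broadcast}(h')$; $h''\leftarrow$ any best history in $B'$; $(R'',B'')\leftarrow\mathrm{Broadcast}(h'')$; $h\leftarrow$ any best history in $R''$; if $h\in B''$ and $h$ is uniquely best in $R'$, call $\mathrm{Deliver}(h)$. Multi-consensus. A protocol $\mathcal P$ with these function parameters is a multi-consensus protocol if: (Liveness) if $h$ is the longest history $\mathcal P$ has delivered by time-step $s$ on a non-failing node $i$ (or $h=[]$ if none), then (with probability 1) there is a future step $s'>s$ at which $\mathcal P$ on $i$ invokes $\mathrm{Deliver}(h')$ with $|h'|>|h|$; (Validity) for some constant $\delta\ge0$, if $\mathcal P$ invokes $\mathrm{Deliver}(h'\,\|\,[p])$ at step $s'$ on node $j$, then $p$ is a proposal $\langle i,m,r\rangle$ where node $i$ obtained $m$ from an invocation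 of ChooseMessage at some step $s\le s'$ with $s'-s\le\delta$; (Consistency) if $\mathcal P$ invokes $\mathrm{Deliver}(h)$ at step $s$ on node $i$ and later $\mathrm{Deliver}(h')$ at step $s'\ge s$ on node $j$ (same or different), then $h$ is a prefix of $h'$. *)

From HB Require Import structures.
From mathcomp Require Import all_boot all_order all_algebra.
From mathcomp Require Import all_classical all_reals all_analysis.

Set Implicit Arguments.
Unset Strict Implicit.
Unset Printing Implicit Defensive.

Import Order.TTheory GRing.Theory Num.Theory.
Local Open Scope ring_scope.
Local Open Scope classical_set_scope.

Section Histories.
Variables (R : realType) (M : eqType) (n : nat).

(* a proposal <i, m, r> *)
Definition proposal := ('I_n * M * R)%type.
Definition history := seq proposal.

(* priority of a nonempty history = priority of its last proposal
   (the value on [::] is irrelevant: it is never used) *)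
Definition hprio (h : history) : R :=
  if h is p :: t then (last p t).2 else 0.

Definition is_best (h : history) (H : seq history) : Prop :=
  h \in H /\ forall h', h' \in H -> ~ (hprio h < hprio h').

Definition uniquely_best (h : history) (H : seq history) : Prop :=
  h \in H /\ forall h', h' \in H -> h' != h -> ~ (hprio h <= hprio h').

End Histories.

(* The (deterministic) QSC execution, given the network schedule, the *)
(* application choices, the tie-breaking among best histories, and    *)
(* the realized random priorities rr i k (node i, QSC round k).       *)
(* QSC round k uses broadcast time-steps 2k and 2k+1; the delivery    *)
(* decision of round k happens when the second call returns, i.e. at  *)
(* time-step 2k+2.                                                    *)
Section Execution.
Variables (R : realType) (M : eqType) (n : nat).
Variable alive : 'I_n -> nat -> bool.          (* alive i s : node i reaches step s *)
Variables NR NB : nat -> 'I_n -> {set 'I_n}.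
Variable choose : 'I_n -> nat -> history R M n -> M.
Variable pick : nat -> 'I_n -> seq (history R M n) -> history R M n.
  (* "any best history": the choice made by node i at step s *)
Variable rr : 'I_n -> nat -> R.                (* RandomValue of node i in round k *)

Local Notation hist := (history R M n).

Definition hp (st : 'I_n -> hist) (k : nat) (j : 'I_n) : hist :=
  rcons (st j) (j, choose j k (st j), rr j k).
Definition Bp st k (i : 'I_n) : seq hist := [seq hp st k j | j <- enum (NB k.*2 i)].
Definition Rp st k (i : 'I_n) : seq hist := [seq hp st k j | j <- enum (NR k.*2 i)].
Definition hpp st k (j : 'I_n) : hist := pick k.*2 j (Bp st k j).
Definition Bpp st k (i : 'I_n) : seq hist := [seq hpp st k j | j <- enum (NB k.*2.+1 i)].
Definition Rpp st k (i : 'I_n) : seq hist := [seq hpp st k j | j <- enum (NR k.*2.+1 i)].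
Definition next_state st k (i : 'I_n) : hist := pick k.*2.+1 i (Rpp st k i).

(* state k i = the value of h on node i at the start of round k *)
Fixpoint state (k : nat) : 'I_n -> hist :=
  match k with
  | 0 => fun _ => [::]
  | k'.+1 => next_state (state k') k'
  end.

Definition msg (s : nat) (j : 'I_n) : hist :=
  if odd s then hpp (state s./2) s./2 j else hp (state s./2) s./2 j.

(* node i invokes Deliver(state k.+1 i) at time-step 2k+2 *)
Definition delivers (k : nat) (i : 'I_n) : Prop :=
  alive i k.*2.+2 /\
  state k.+1 i \in Bpp (state k) k i /\
  uniquely_best (state k.+1 i) (Rp (state k) k i).

Definition delivered_by (s : nat) (i : 'I_n) (h : hist) : Prop :=
  exists k, (k.*2.+2 <= s)%N /\ delivers k i /\ h = state k.+1 i.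

Definition longest_delivered (s : nat) (i : 'I_n) (h : hist) : Prop :=
  (delivered_by s i h /\ forall h', delivered_by s i h' -> (size h' <= size h)%N)
  \/ (h = [::] /\ forall h', ~ delivered_by s i h').

Definition tsb_full (t_r t_b : nat) : Prop :=
  forall (s : nat) (i : 'I_n), alive i s.+1 ->
  [/\ t_r <= #|NR s i|, t_b <= #|NB s i|,
      NR s i \subset [set j | alive j s],
      NB s i \subset [set j | alive j s] &
      forall j, j \in NB s i -> forall k : 'I_n,
        exists2 j', j' \in NR s k & msg s j' = msg s j]%N.

Definition consistency_run : Prop :=
  forall (k k' : nat) (i j : 'I_n), (k <= k')%N ->
    delivers k i -> delivers k' j -> prefix (state k.+1 i) (state k'.+1 j).

Definition validity_run (delta : nat) : Prop :=
  forall (k : nat) (i : 'I_n) (h0 : hist) (p : proposal R M n),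
    delivers k i -> state k.+1 i = rcons h0 p ->
    exists k0 : nat,
      [/\ p.1.2 = choose p.1.1 k0 (state k0 p.1.1),
          alive p.1.1 k0.*2,
          k0.*2 <= k.*2.+2 &
          k.*2.+2 - k0.*2 <= delta]%N.

End Execution.

Section Indep.
Local Open Scope ereal_scope.
Variables (d : measure_display) (T : measurableType d) (R : realType).
Variable (P : probability T R).

Definition mutually_independent (I : eqType) (X : I -> T -> R) : Prop :=
  forall (F : seq I) (B : I -> set R), uniq F ->
    (forall i, measurable (B i)) ->
    P (\bigcap_(i in [set` F]) (X i @^-1` B i)) =
    \big[*%E/1%E]_(i <- F) P (X i @^-1` B i).

Definition identically_distributed (I : Type) (X : I -> T -> R) : Prop :=
  forall i j (B : set R), measurable B -> P (X i @^-1` B) = P (X j @^-1` B).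
End Indep.

From HB Require Import structures.
From mathcomp Require Import all_boot all_order all_algebra.
From mathcomp Require Import all_classical all_reals all_analysis.
From mathcomp Require Import zify ring.
Import Order.TTheory GRing.Theory Num.Theory.
Local Open Scope ring_scope.
Local Open Scope classical_set_scope.

Set Implicit Arguments.
Unset Strict Implicit.

(* Full spread puts every
   proposal of a broadcast set B into the receive set R of every node at the
   next step.  So if node i delivers h in round k, h is uniquely best among the
   first-step proposals i received, while every surviving node m adopts the
   best element of its second-step receive set, which contains h and is made of
   first-step proposals that i also received: m adopts h.  Every later state
   extends an earlier one by a single proposal, so every later delivery
   extends h; and the last proposal of a delivered history was chosen in the
   same round, two steps before delivery.
   For liveness, fix in each round k a relay j1 in N_B(2k+1, i) and a leader
   j0 in N_B(2k, j1).  If j0 draws the larger of two values of positive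
   probability and every other node the smaller one, node i delivers in round
   k.  These events have one probability c > 0 and are independent across
   rounds, so none of them occurs after step s with probability at most
   (1 - c)^N for every N, that is, with probability 0. *)

Lemma prodr_one_hot (R : comPzSemiRingType) n (j : 'I_n) (a b : R) :
  \prod_(x < n) (if x == j then a else b) = a * b ^+ n.-1.
Proof.
rewrite (bigD1 j) //= eqxx; congr (_ * _).
rewrite (eq_bigr (fun=> b)) => [|x /negbTE -> //].
by rewrite prodr_const cardC1 card_ord.
Qed.

Lemma pick_set_mem (T : finType) (A : {set T}) x0 :
  (0 < #|A|)%N -> odflt x0 [pick x in A] \in A.
Proof.
by rewrite card_gt0 => /set0Pn[x xA]; case: pickP => [//|/(_ x)]; rewrite xA.
Qed.

Section Priorities.
Variables (R : realType) (M : eqType) (n : nat).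
Implicit Types (h : history R M n) (H : seq (history R M n)).

Lemma hprio_rcons h (p : proposal R M n) : hprio (rcons h p) = p.2.
Proof. by case: h => [|q h] //=; rewrite last_rcons. Qed.

Lemma uniquely_best_eq h h' H H' :
  uniquely_best h H -> is_best h' H' -> h \in H' -> h' \in H -> h' = h.
Proof.
move=> [_ h_max] [_ h'_max] hH' h'H; apply/eqP/negPn/negP => neq.
by have := h_max _ h'H neq; have := h'_max _ hH'; case: ltgtP.
Qed.

Lemma uniquely_best_max (I : Type) (f : I -> history R M n) x0 H :
  (forall x, f x != f x0 -> hprio (f x) < hprio (f x0)) ->
  f x0 \in H -> (forall h, h \in H -> exists x, h = f x) ->
  uniquely_best (f x0) H.
Proof.
move=> f_max fx0H H_img; split=> // h /H_img[x ->] neq.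
by have := f_max _ neq; case: ltgtP.
Qed.

End Priorities.

Section Run.
Variables (R : realType) (M : eqType) (n t_r t_b : nat).
Variable alive : 'I_n -> nat -> bool.
Variables NR NB : nat -> 'I_n -> {set 'I_n}.
Variable choose : 'I_n -> nat -> history R M n -> M.
Variable pick : nat -> 'I_n -> seq (history R M n) -> history R M n.
Variable rr : 'I_n -> nat -> R.
Hypothesis tr_gt0 : (0 < t_r)%N.
Hypothesis tb_gt0 : (0 < t_b)%N.
Hypothesis alive_pred : forall i s, alive i s.+1 -> alive i s.
Hypothesis pick_best :
  forall s i (H : seq (history R M n)), H != [::] -> is_best (pick s i H) H.
Hypothesis tsb : tsb_full alive NR NB choose pick rr t_r t_b.

Local Notation st := (state NR NB choose pick rr).
Local Notation hp := (hp choose rr).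
Local Notation hpp := (hpp NB choose pick rr).
Local Notation Bp := (Bp NB choose rr).
Local Notation Rp := (Rp NR choose rr).
Local Notation Bpp := (Bpp NB choose pick rr).
Local Notation Rpp := (Rpp NR NB choose pick rr).
Local Notation delivers := (delivers alive NR NB choose pick rr).

Lemma NB_alive s i j : alive i s.+1 -> j \in NB s i -> alive j s.
Proof. by move=> /tsb[_ _ _ /fintype.subsetP NB_sub _] /NB_sub; rewrite inE. Qed.

Lemma NR_alive s i j : alive i s.+1 -> j \in NR s i -> alive j s.
Proof. by move=> /tsb[_ _ /fintype.subsetP NR_sub _ _] /NR_sub; rewrite inE. Qed.

Lemma NB_card_gt0 s i : alive i s.+1 -> (0 < #|NB s i|)%N.
Proof. by move=> /tsb[_ card_NB _ _ _]; apply: leq_trans card_NB. Qed.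

Lemma NR_card_gt0 s i : alive i s.+1 -> (0 < #|NR s i|)%N.
Proof. by move=> /tsb[card_NR _ _ _ _]; apply: leq_trans card_NR. Qed.

Lemma msg_double k j : msg NR NB choose pick rr k.*2 j = hp (st k) k j.
Proof. by rewrite /msg odd_double doubleK. Qed.

Lemma msg_doubleS k j : msg NR NB choose pick rr k.*2.+1 j = hpp (st k) k j.
Proof. by rewrite /msg /= odd_double uphalf_double. Qed.

Lemma Bp_sub_Rp k j m : alive j k.*2.+1 ->
  {subset Bp (st k) k j <= Rp (st k) k m}.
Proof.
move=> /tsb[_ _ _ _ spread] h /mapP[z].
rewrite mem_enum => /spread/(_ m)[z' z'R].
by rewrite !msg_double => <- ->; apply: map_f; rewrite mem_enum.
Qed.

Lemma Bpp_sub_Rpp k i m : alive i k.*2.+2 ->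
  {subset Bpp (st k) k i <= Rpp (st k) k m}.
Proof.
move=> /tsb[_ _ _ _ spread] h /mapP[z].
rewrite mem_enum => /spread/(_ m)[z' z'R].
by rewrite !msg_doubleS => <- ->; apply: map_f; rewrite mem_enum.
Qed.

Lemma hpp_best k j : alive j k.*2.+1 -> is_best (hpp (st k) k j) (Bp (st k) k j).
Proof.
by move=> aj; apply: pick_best; rewrite -size_eq0 -lt0n size_map -cardE NB_card_gt0.
Qed.

Lemma state_best k m : alive m k.*2.+2 -> is_best (st k.+1 m) (Rpp (st k) k m).
Proof.
by move=> am; apply: pick_best; rewrite -size_eq0 -lt0n size_map -cardE NR_card_gt0.
Qed.

Lemma Rpp_sub_Rp k i m : alive i k.*2.+2 ->
  {subset Rpp (st k) k i <= Rp (st k) k m}.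
Proof.
move=> ai h /mapP[x]; rewrite mem_enum => /(NR_alive ai) ax ->.
exact: Bp_sub_Rp ax _ (hpp_best ax).1.
Qed.

Lemma state_in_Rp k i m : alive m k.*2.+2 -> st k.+1 m \in Rp (st k) k i.
Proof. by move=> am; apply: Rpp_sub_Rp am _ (state_best am).1. Qed.

Lemma state_rcons k m : alive m k.*2.+2 ->
  exists2 z, alive z k.*2 & st k.+1 m = hp (st k) k z.
Proof.
move=> am; have /mapP[z] := state_in_Rp m am; rewrite mem_enum => zR ->.
by exists z; first exact: NR_alive (alive_pred am) zR.
Qed.

Lemma size_state k m : alive m k.*2 -> size (st k m) = k.
Proof.
elim: k m => [//|k IH] m; rewrite doubleS => /state_rcons[z az ->].
by rewrite size_rcons IH.
Qed.

Lemma delivers_state_eq k i m : delivers k i -> alive m k.*2.+2 ->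
  st k.+1 m = st k.+1 i.
Proof.
move=> [ai [iBpp iUB]] am.
apply: uniquely_best_eq iUB (state_best am) _ (state_in_Rp i am).
exact: Bpp_sub_Rpp ai _ iBpp.
Qed.

Lemma delivers_prefix_state k i k' m : delivers k i -> (k <= k')%N ->
  alive m k'.*2.+2 -> prefix (st k.+1 i) (st k'.+1 m).
Proof.
move=> dki; elim: k' m => [|k' IH] m; rewrite leq_eqVlt => /predU1P[<- am|];
  try by rewrite (delivers_state_eq dki am) prefix_refl.
- by rewrite ltn0.
- rewrite ltnS => le am; have [z az ->] := state_rcons am.
  exact: prefix_trans (IH z le az) (prefix_rcons _ _).
Qed.

Lemma qsc_consistency : consistency_run alive NR NB choose pick rr.
Proof. by move=> k k' i j le dki [aj _]; apply: delivers_prefix_state dki le aj. Qed.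

Lemma qsc_validity : validity_run alive NR NB choose pick rr 2.
Proof.
move=> k i h p [ai _]; have [z az ->] := state_rcons ai.
by move=> /rcons_inj[_ <-]; exists k; split=> //; lia.
Qed.

Lemma delivers_unique_max k i j1 j0 :
  alive i k.*2.+2 -> j1 \in NB k.*2.+1 i -> j0 \in NB k.*2 j1 ->
  (forall x, x != j0 -> rr x k < rr j0 k) -> delivers k i.
Proof.
move=> ai j1B j0B rr_max; have aj1 := NB_alive ai j1B.
pose q := hp (st k) k.
have q_max x : q x != q j0 -> hprio (q x) < hprio (q j0).
  by move=> neq; rewrite !hprio_rcons rr_max //; apply: contraNneq neq => ->.
have q_img (s : seq 'I_n) h : h \in [seq q x | x <- s] -> exists x, h = q x.
  by move=> /mapP[x _ ->]; exists x.
have j0Bp : q j0 \in Bp (st k) k j1 by apply: map_f; rewrite mem_enum.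
have j0_best H : q j0 \in H -> (forall h, h \in H -> exists x, h = q x) ->
    uniquely_best (q j0) H.
  exact: uniquely_best_max q_max.
have j1_fwd : hpp (st k) k j1 = q j0.
  have [j1Bp _] := hpp_best aj1.
  by apply: uniquely_best_eq (j0_best _ j0Bp (q_img _)) (hpp_best aj1) j0Bp j1Bp.
have j0Rpp : q j0 \in Rpp (st k) k i.
  by rewrite -j1_fwd; apply: Bpp_sub_Rpp ai _ _; apply: map_f; rewrite mem_enum.
have i_adopts : st k.+1 i = q j0.
  have Rpp_img h : h \in Rpp (st k) k i -> exists x, h = q x.
    by move=> /(Rpp_sub_Rp i ai)/q_img.
  have [iRpp _] := state_best ai.
  exact: uniquely_best_eq (j0_best _ j0Rpp Rpp_img) (state_best ai) j0Rpp iRpp.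
split=> //; rewrite i_adopts; split.
  by rewrite -j1_fwd; apply: map_f; rewrite mem_enum.
by apply: j0_best; [apply: Bp_sub_Rp aj1 _ j0Bp | apply: q_img].
Qed.

End Run.

Section IndependentEvents.
Variables (d : measure_display) (T : measurableType d) (R : realType).
Variable P : probability T R.
Variables (G : nat -> set T) (c : R).
Hypothesis G_meas : forall k, measurable (G k).
Hypothesis P_bigsetI_G :
  forall L, uniq L -> P (\big[setI/setT]_(k <- L) G k) = (c ^+ size L)%:E.

Lemma P_bigsetI_setC Nb L : uniq (Nb ++ L) ->
  P (\big[setI/setT]_(k <- Nb) ~` G k `&` \big[setI/setT]_(k <- L) G k) =
  ((1 - c) ^+ size Nb * c ^+ size L)%:E.
Proof.
elim: Nb L => [|a Nb IH] L.
  by move=> uL; rewrite big_nil setTI P_bigsetI_G ?mul1r.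
rewrite cat_cons => uaL; have /andP[_ uL] := uaL.
have uLa : uniq (Nb ++ a :: L) by rewrite -cat1s uniq_catCA.
have PX := IH L uL; have PXa := IH (a :: L) uLa; rewrite big_cons in PXa.
have mX : measurable
    (\big[setI/setT]_(k <- Nb) ~` G k `&` \big[setI/setT]_(k <- L) G k).
  by apply: measurableI; apply: bigsetI_measurable => k _ //; apply: measurableC.
rewrite big_cons -setIA setIC -setDE measureD //; last first.
  by rewrite ltey_eq fin_num_measure.
rewrite setIAC -setIA.
transitivity (((1 - c) ^+ size Nb * c ^+ size L)%:E -
              ((1 - c) ^+ size Nb * c ^+ size (a :: L))%:E)%E.
  by congr (_ - _)%E.
by rewrite -EFinB /= !exprS; congr (_%:E); ring.
Qed.

Lemma P_bigcap_setC_eq0 : 0 < c -> P (\bigcap_k ~` G k) = 0.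
Proof.
move=> c_gt0; have c_le1 : c <= 1.
  rewrite -lee_fin -(expr1 c) -(P_bigsetI_G (L := [:: 0%N])) //.
  by rewrite probability_le1 // big_seq1.
have never_meas : measurable (\bigcap_k ~` G k).
  by apply: bigcapT_measurable => k; apply: measurableC.
have never_le N : fine (P (\bigcap_k ~` G k)) <= (1 - c) ^+ N.
  rewrite -lee_fin fineK ?fin_num_measure //.
  have := P_bigsetI_setC (Nb := iota 0 N) (L := [::]).
  rewrite cats0 iota_uniq size_iota expr0 mulr1 big_nil setIT => /(_ isT) <-.
  apply: le_measure; rewrite ?inE //.
    by apply: bigsetI_measurable => k _; apply: measurableC.
  by rewrite -bigcap_seq; apply: sub_bigcap => k _; apply: bigcap_inf.
have q_lt1 : `|1 - c| < 1 by rewrite ger0_norm ?subr_ge0 // ltrBlDr ltrDl.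
apply/eqP; rewrite eq_le measure_ge0 andbT.
rewrite -(fineK (fin_num_measure P _ never_meas)) lee_fin.
by apply: cvgr_to_ge (cvg_expr q_lt1) _; apply: nearW.
Qed.

End IndependentEvents.

Section IndependentDraws.
Variables (d : measure_display) (T : measurableType d) (R : realType).
Variable P : probability T R.
Variables (n : nat) (r : 'I_n -> nat -> T -> R).
Hypothesis r_meas : forall x k, measurable_fun setT (r x k).
Hypothesis r_indep : mutually_independent P (fun xk : 'I_n * nat => r xk.1 xk.2).

Lemma measurable_draw x k (B : set R) : measurable B -> measurable (r x k @^-1` B).
Proof. by move=> mB; rewrite -[_ @^-1` _]setTI; apply: r_meas. Qed.

Definition draws (v : nat -> 'I_n -> R) k : set T :=
  [set w | forall x, r x k w = v k x].

Lemma draws_bigsetI v k :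
  draws v k = \big[setI/setT]_(x <- enum 'I_n) (r x k @^-1` [set v k x]).
Proof.
rewrite -bigcap_seq; apply/seteqP; split=> [w drw x _ //|w drw x].
by apply: drw; rewrite /= mem_enum.
Qed.

Lemma draws_measurable v k : measurable (draws v k).
Proof.
rewrite draws_bigsetI; apply: bigsetI_measurable => x _.
exact: measurable_draw.
Qed.

Lemma P_bigsetI_draws v L : uniq L ->
  P (\big[setI/setT]_(k <- L) draws v k) =
  (\prod_(k <- L) \prod_(x <- enum 'I_n) P (r x k @^-1` [set v k x]))%E.
Proof.
move=> uL; under eq_bigr do rewrite draws_bigsetI.
pose F := [seq (x, k) | k <- L, x <- enum 'I_n].
have uF : uniq F.
  apply: allpairs_uniq => //; first exact: enum_uniq.
  by move=> [? ?] [? ?] _ _ [-> ->].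
rewrite -(big_allpairs_dep (h := fun (k : nat) (x : 'I_n) => (x, k))
  (r2 := fun=> enum 'I_n) (F := fun xk => r xk.1 xk.2 @^-1` [set v xk.2 xk.1])) /=.
have := @r_indep F (fun xk : 'I_n * nat => [set v xk.2 xk.1]) uF.
by rewrite -bigcap_seq => -> //; rewrite big_allpairs_dep.
Qed.

End IndependentDraws.

Section Liveness.
Variables (d : measure_display) (T : measurableType d) (R : realType).
Variable P : probability T R.
Variables (M : eqType) (n t_r t_b : nat).
Variable alive : 'I_n -> nat -> bool.
Variables NR NB : nat -> 'I_n -> {set 'I_n}.
Variable choose : 'I_n -> nat -> history R M n -> M.
Variable pick : nat -> 'I_n -> seq (history R M n) -> history R M n.
Variable r : 'I_n -> nat -> T -> R.
Hypothesis tr_gt0 : (0 < t_r)%N.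
Hypothesis tb_gt0 : (0 < t_b)%N.
Hypothesis alive_pred : forall i s, alive i s.+1 -> alive i s.
Hypothesis pick_best :
  forall s i (H : seq (history R M n)), H != [::] -> is_best (pick s i H) H.
Hypothesis r_meas : forall x k, measurable_fun setT (r x k).
Hypothesis r_indep : mutually_independent P (fun xk : 'I_n * nat => r xk.1 xk.2).
Hypothesis r_iid : identically_distributed P (fun xk : 'I_n * nat => r xk.1 xk.2).
Hypothesis tsb :
  forall w, tsb_full alive NR NB choose pick (fun x k => r x k w) t_r t_b.
Variables lo hi : R.
Hypothesis lo_lt_hi : lo < hi.
Hypothesis P_lo_gt0 : forall x k, (0 < P (r x k @^-1` [set lo]))%E.
Hypothesis P_hi_gt0 : forall x k, (0 < P (r x k @^-1` [set hi]))%E.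
Variable i : 'I_n.
Hypothesis i_alive : forall s, alive i s.

Local Notation run w := (fun x k => r x k w).

(* The relay and the leader depend on the schedule only, not on the draws:
   this is where the independence of the network from the priorities enters. *)
Definition relay k := odflt i [pick j in NB k.*2.+1 i].
Definition leader k := odflt i [pick j in NB k.*2 (relay k)].

Definition leader_wins k x := if x == leader k then hi else lo.

Lemma draws_leader_delivers w k : draws r leader_wins k w ->
  delivers alive NR NB choose pick (run w) k i.
Proof.
move=> wins; have tsb_w := tsb w.
have relay_in := pick_set_mem i (NB_card_gt0 tb_gt0 tsb_w (i_alive k.*2.+2)).
have relay_alive := NB_alive tsb_w (i_alive _) relay_in.
have leader_in := pick_set_mem i (NB_card_gt0 tb_gt0 tsb_w relay_alive).
apply: (delivers_unique_max tr_gt0 tb_gt0 pick_best tsb_w (i_alive _)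
  relay_in leader_in).
by move=> x x_neq; rewrite !wins /leader_wins eqxx (negbTE x_neq).
Qed.

Definition p_win :=
  fine (P (r i 0 @^-1` [set hi])) * fine (P (r i 0 @^-1` [set lo])) ^+ n.-1.

Lemma p_win_gt0 : 0 < p_win.
Proof.
have fine_P_gt0 v :
    (0 < P (r i 0 @^-1` [set v]))%E -> 0 < fine (P (r i 0 @^-1` [set v])).
  move=> P_gt0; apply: fine_gt0; rewrite P_gt0 ltey_eq fin_num_measure //.
  exact: (measurable_draw r_meas).
by rewrite mulr_gt0 ?exprn_gt0 ?fine_P_gt0.
Qed.

Lemma P_bigsetI_leader_wins L : uniq L ->
  P (\big[setI/setT]_(k <- L) draws r leader_wins k) = (p_win ^+ size L)%:E.
Proof.
move=> uL; rewrite P_bigsetI_draws //.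
transitivity (\prod_(k <- L) p_win%:E)%E; last first.
  by rewrite prodEFin big_const_seq count_predT iter_mulr_1.
apply: eq_bigr => k _.
rewrite /p_win -(prodr_one_hot (leader k)) -prodEFin big_enum /=.
apply: eq_bigr => x _; rewrite (r_iid (x, k) (i, 0)) ?measurable_set1 //=.
rewrite /leader_wins; case: eqP => _; rewrite fineK // fin_num_measure //;
  exact: (measurable_draw r_meas).
Qed.

Lemma qsc_liveness_ae s :
  {ae P, forall w h, longest_delivered alive NR NB choose pick (run w) s i h ->
     exists k, [/\ (s < k.*2.+2)%N, delivers alive NR NB choose pick (run w) k i &
       (size h < size (state NR NB choose pick (run w) k.+1 i))%N]}.
Proof.
exists (\bigcap_k ~` draws r leader_wins (k + s)); split.
- by apply: bigcapT_measurable => k; apply/measurableC/draws_measurable.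
- apply: (P_bigcap_setC_eq0 (c := p_win)) => [k|L uL|]; last exact: p_win_gt0.
    exact: draws_measurable.
  rewrite -(big_map (addn^~ s) xpredT) P_bigsetI_leader_wins ?size_map //.
  by rewrite map_inj_uniq // => a b /addIn.
move=> w no_progress k _ wins; apply: no_progress => h h_longest.
have size_st m : size (state NR NB choose pick (run w) m i) = m.
  exact: size_state tr_gt0 tb_gt0 alive_pred pick_best (tsb w) _ _ (i_alive _).
exists (k + s)%N; split; first lia.
  exact: draws_leader_delivers.
rewrite size_st; case: h_longest => [[[k' [le_k's [_ ->]]] _]|[-> _]] //.
by rewrite size_st ltnS; lia.
Qed.

End Liveness.

Unset Implicit Arguments.
Set Strict Implicit.

Theorem theorem1
  (d : measure_display) (T : measurableType d) (R : realType)
  (P : probability T R)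
  (M : eqType) (n t_r t_b : nat)
  (alive : 'I_n -> nat -> bool)
  (NR NB : nat -> 'I_n -> {set 'I_n})
  (choose : 'I_n -> nat -> history R M n -> M)
  (pick : nat -> 'I_n -> seq (history R M n) -> history R M n)
  (r : 'I_n -> nat -> T -> R) :
  (0 < t_r)%N -> (0 < t_b)%N ->
  (* crashes are permanent *)
  (forall i s, alive i s.+1 -> alive i s) ->
  (* "any best history" *)
  (forall s i (H : seq (history R M n)), H != [::] -> is_best (pick s i H) H) ->
  (* RandomValue: node-private i.i.d. draws from a fixed distribution with
     at least two values of nonzero probability *)
  (forall i k, measurable_fun setT (r i k)) ->
  mutually_independent P (fun ik : 'I_n * nat => r ik.1 ik.2) ->
  identically_distributed P (fun ik : 'I_n * nat => r ik.1 ik.2) ->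
  (exists a b : R, a != b /\
     forall i k, (0 < P (r i k @^-1` [set a]))%E /\ (0 < P (r i k @^-1` [set b]))%E) ->
  (* the network (schedule independent of the priorities) provides
     full-spread TSB(t_r, t_b, n) in every run *)
  (forall w : T, tsb_full alive NR NB choose pick (fun i k => r i k w) t_r t_b) ->
  (* Liveness *)
  (forall (i : 'I_n), (forall s, alive i s) -> forall s : nat,
     {ae P, forall w : T, forall h : history R M n,
        longest_delivered alive NR NB choose pick (fun i k => r i k w) s i h ->
        exists k : nat, [/\ (s < k.*2.+2)%N,
          delivers alive NR NB choose pick (fun i k => r i k w) k i &
          (size h < size (state NR NB choose pick (fun i k => r i k w) k.+1 i))%N]})
  /\
  (* Validity *)
  (exists delta : nat, forall w : T,
     validity_run alive NR NB choose pick (fun i k => r i k w) delta)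
  /\
  (* Consistency *)
  (forall w : T, consistency_run alive NR NB choose pick (fun i k => r i k w)).
Proof.
move=> tr_gt0 tb_gt0 alive_pred pick_best r_meas r_indep r_iid [a [b [a_neq_b P_ab_gt0]]] tsb.
have [lo [hi [lo_lt_hi P_lo_gt0 P_hi_gt0]]] : exists lo hi, [/\ lo < hi,
    forall x k, (0 < P (r x k @^-1` [set lo]))%E &
    forall x k, (0 < P (r x k @^-1` [set hi]))%E].
  case: (ltgtP a b) => [a_lt_b|b_lt_a|a_eq_b]; last by rewrite a_eq_b eqxx in a_neq_b.
    by exists a, b; split=> // x k; case: (P_ab_gt0 x k).
  by exists b, a; split=> // x k; case: (P_ab_gt0 x k).
split; [|split].
- move=> i i_alive s.
  exact: (qsc_liveness_ae tr_gt0 tb_gt0 alive_pred pick_best r_meas r_indep r_iid tsb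
    lo_lt_hi P_lo_gt0 P_hi_gt0 i_alive s).
- by exists 2%N => w; apply: qsc_validity tr_gt0 tb_gt0 alive_pred pick_best (tsb w).
- by move=> w; apply: qsc_consistency tr_gt0 tb_gt0 alive_pred pick_best (tsb w).
Qed.
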